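(* Let $S,T,V$ be ordered trees and let $g\colon V\to T$ and $f\colon T\to S$ be rigid surjections. Let $x$ be a leaf of $S$ and let $y$ be the leaf of $T$ that is $f$-conjugate to $x$. Then \[ f_x\circ g_y=(f\circ g)_x. \]
   Context: A tree is a finite, non-empty poset $(T,\sqsubseteq_T)$ with a smallest element (root) in which the predecessors of each element form a chain (each element is its own predecessor); $v\wedge_T w$ is the largest common predecessor. An ordered tree has a fixed linear order on the immediate successors of each node, inducing the lexicographic linear order $\leq_T$: $v\leq_T w$ if $v\sqsubseteq_T w$, and for incomparable $v,w$, $v\leq_T w$ iff the immediate successor of $v\wedge_T w$ below $v$ precedes the one below $w$. A morphism preserves $\wedge$, is $\leq$-monotone and maps root to root; an embedding is an injective morphism. A function $f\colon T\to S$ is a rigid surjection if there is a morphism $e\colon S\to T$ (unique, called the injection of $f$) with $f\circ e={\rm id}_S$ and $e(f(w))\sqsubseteq_T w$ for all $w$. For $v\in T$, $T^v=\{w\in T\mid w\leq_T v\}$. A leaf is a $\sqsubseteq$-maximal node. For an embedding $i\colon S\to T$, a leaf $y$ of $T$ is $i$-conjugate to a leaf $x$ of $S$ if: (i) when $x$ is the $\leq_S$-largest leaf of $S$, $y$ is the $\leq_T$-largest leaf of $T$; (ii) otherwise, with $x'$ the $\leq_S$-smallest leaf with $x<_S x'$, $y$ is the $\leq_T$-largest leaf with $y<_T i(x')$ and $i(x)\wedge_T i(x')=y\wedge_T i(x')$. A leaf $y$ of $T$ is $f$-conjugate to the leaf $x$ of $S$ if it is $i$-conjugate to $x$ for $i$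 the injection of $f$, and then $f_x:=f\upharpoonright T^y$. Similarly $g_y=g\upharpoonright V^z$ with $z$ the leaf of $V$ that is $g$-conjugate to $y$, and $(f\circ g)_x$ is defined using the rigid surjection $f\circ g$. *)

From mathcomp Require Import all_boot.
Set Implicit Arguments. Unset Strict Implicit. Unset Printing Implicit Defensive.

(* An ordered tree: a finite poset (sq = "⊑") with a root, in which the
   predecessors of every node form a chain, together with, for each node,
   a strict linear order (sib) on its immediate successors. *)

Definition is_isucc (T : finType) (sq : rel T) (v w : T) : bool :=
  [&& sq v w, v != w & [forall u, (sq v u && sq u w) ==> ((u == v) || (u == w))]].

Record otree : Type := OTree {
  ot_car :> finType;
  ot_sq : rel ot_car;
  ot_sib : rel ot_car;
  ot_root : ot_car;
  ot_sq_refl : reflexive ot_sq;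
  ot_sq_anti : antisymmetric ot_sq;
  ot_sq_trans : transitive ot_sq;
  ot_root_min : forall v, ot_sq ot_root v;
  ot_chain : forall v a b, ot_sq a v -> ot_sq b v -> ot_sq a b || ot_sq b a;
  ot_sib_sibs : forall a b, ot_sib a b ->
      exists v, is_isucc ot_sq v a /\ is_isucc ot_sq v b;
  ot_sib_irr : irreflexive ot_sib;
  ot_sib_trans : transitive ot_sib;
  ot_sib_total : forall v a b, is_isucc ot_sq v a -> is_isucc ot_sq v b ->
      a != b -> ot_sib a b || ot_sib b a
}.

Section Ops.
Variable T : otree.

Definition sq (v w : T) : bool := ot_sq v w.
Definition isucc (v w : T) : bool := is_isucc (@ot_sq T) v w.

Definition is_meet (v w m : T) : bool :=
  [&& sq m v, sq m w & [forall u, (sq u v && sq u w) ==> sq u m]].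
Definition meet (v w : T) : T := odflt (ot_root T) [pick m | is_meet v w m].

Definition lexle (v w : T) : bool :=
  sq v w ||
  [exists a, exists b, [&& isucc (meet v w) a, sq a v, isucc (meet v w) b,
                          sq b w & ot_sib a b]].
Definition lexlt (v w : T) : bool := lexle v w && (v != w).

Definition leaf (v : T) : bool := [forall w, sq v w ==> (w == v)].
Definition maxleaf (v : T) : bool := leaf v && [forall w, leaf w ==> lexle w v].

End Ops.

Definition morphism (S T : otree) (f : S -> T) : Prop :=
  [/\ forall v w, f (meet v w) = meet (f v) (f w),
      forall v w, lexle v w -> lexle (f v) (f w)
    & f (ot_root S) = ot_root T].

Definition embedding (S T : otree) (f : S -> T) : Prop :=
  morphism f /\ injective f.

Definition injection_of (T S : otree) (f : T -> S) (e : S -> T) : Prop :=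
  [/\ morphism e, forall s, f (e s) = s & forall w, sq (e (f w)) w].

Definition rigid_surjection (T S : otree) (f : T -> S) : Prop :=
  exists e, injection_of f e.

Definition iconj (S T : otree) (i : S -> T) (x : S) (y : T) : Prop :=
  [/\ leaf x, leaf y &
    ((maxleaf x /\ maxleaf y) \/
     (exists x' : S,
      [/\ leaf x', lexlt x x',
          (forall x'', leaf x'' -> lexlt x x'' -> lexle x' x''),
          lexlt y (i x') &
          (meet (i x) (i x') = meet y (i x') /\
          forall y', leaf y' -> lexlt y' (i x') ->
                     meet (i x) (i x') = meet y' (i x') -> lexle y' y)]))].

Definition fconj (T S : otree) (f : T -> S) (x : S) (y : T) : Prop :=
  exists e, injection_of f e /\ iconj e x y.

From mathcomp Require Import all_boot.
Set Implicit Arguments. Unset Strict Implicit. Unset Printing Implicit Defensive.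

(* Let i and j be the injections of f and g, and let x' be the leaf after x.
   The leaf y' after y lies in the branch of i x' above m = i x ∧ i x', so j y'
   and j (i x') lie in a common branch above j m; being left of either of them
   with meet j m is then the same condition, which makes the leaf z conjugate
   to y also conjugate to x under j ∘ i, the injection of f ∘ g.  If w ≤ z but
   g w were beyond y, then g w would lie in the branch of y' above y ∧ y', and
   w, lying above j (g w), in the branch of j y' above z ∧ j y', i.e. to the
   right of z: so g maps V^z into T^y. *)

Section Tree.
Variable T : otree.
Implicit Types u v w a b c l m p q t : T.

Lemma sq_refl v : sq v v. Proof. exact: ot_sq_refl. Qed.

Lemma sq_anti v w : sq v w -> sq w v -> v = w.
Proof.
by move=> vw wv; apply: (@ot_sq_anti T); rewrite /sq in vw wv; rewrite vw wv.
Qed.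

Lemma sq_trans u v w : sq u v -> sq v w -> sq u w.
Proof. exact: ot_sq_trans. Qed.

Lemma sq_chain v a b : sq a v -> sq b v -> sq a b || sq b a.
Proof. exact: ot_chain. Qed.

Definition height v := #|[set u | sq u v]|.

Lemma height_lt v w : sq v w -> v != w -> height v < height w.
Proof.
move=> vw nvw; apply: proper_card; rewrite properE; apply/andP; split.
  by apply/subsetP => u; rewrite !inE => /sq_trans; apply.
apply/subsetPn; exists w; rewrite !inE ?sq_refl //.
by apply: contra nvw => wv; apply/eqP/sq_anti.
Qed.

Lemma isuccP v a :
  reflect [/\ sq v a, v != a & forall u, sq v u -> sq u a -> u = v \/ u = a]
          (isucc v a).
Proof.
apply: (iffP and3P) => [[va nva /forallP between]|[va nva between]].
  split=> // u vu ua; move: (between u); rewrite /sq in vu ua.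
  by rewrite vu ua /= => /orP[/eqP|/eqP]; [left|right].
split=> //; apply/forallP => u; apply/implyP => /andP[vu ua].
by case: (between u vu ua) => ->; rewrite eqxx ?orbT.
Qed.

Lemma isucc_sq v a : isucc v a -> sq v a.
Proof. by case/isuccP. Qed.

Lemma isucc_neq v a : isucc v a -> v != a.
Proof. by case/isuccP. Qed.

Lemma isucc_uniq m a b p : isucc m a -> isucc m b -> sq a p -> sq b p -> a = b.
Proof.
move=> /isuccP[ma nma between_a] /isuccP[mb nmb between_b] ap bp.
case/orP: (sq_chain ap bp) => [ab|ba].
  by case: (between_b a ma ab) => // ea; rewrite ea eqxx in nma.
by case: (between_a b mb ba) => // eb; rewrite eb eqxx in nmb.
Qed.

Lemma isucc_parent_uniq m n a : isucc m a -> isucc n a -> m = n.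
Proof.
move=> /isuccP[ma nma between_m] /isuccP[na nna between_n].
case/orP: (sq_chain ma na) => [mn|nm].
  by case: (between_m n mn na) => // ena; rewrite ena eqxx in nna.
by case: (between_n m nm ma) => // ema; rewrite ema eqxx in nma.
Qed.

Lemma isucc_exists m p : sq m p -> m != p -> exists2 a, isucc m a & sq a p.
Proof.
move=> mp nmp.
pose P := [pred t | [&& sq m t, t != m & sq t p]].
have Pp : P p by rewrite /= mp eq_sym nmp sq_refl.
case: (arg_minnP height Pp) => a /and3P[ma nam ap] amin.
exists a => //; apply/isuccP; split; rewrite 1?eq_sym // => u mu ua.
case: (eqVneq u m) => [|num]; first by left.
case: (eqVneq u a) => [|nua]; first by right.
have := amin u; rewrite /= mu num (sq_trans ua ap) => /(_ isT).
by rewrite leqNgt height_lt.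
Qed.

Lemma sq_isucc_cases m a v t : isucc m a -> sq a v -> sq t v -> sq t m \/ sq a t.
Proof.
move=> ma av tv; have mv := sq_trans (isucc_sq ma) av.
case/orP: (sq_chain tv mv) => [tm|mt]; first by left.
case: (eqVneq m t) => [<-|nmt]; first by left; apply: sq_refl.
have [c mc ct] := isucc_exists mt nmt.
by right; rewrite -(isucc_uniq mc ma (sq_trans ct tv) av).
Qed.

Lemma meet_spec v w : is_meet v w (meet v w).
Proof.
rewrite /meet; case: pickP => [//|no_meet]; exfalso.
pose P := [pred u | sq u v && sq u w].
have Proot : P (ot_root T) by rewrite /= /sq !ot_root_min.
case: (arg_maxnP height Proot) => m /andP[mv mw] mmax.
move: (no_meet m); rewrite /is_meet mv mw /= => /negbT/negP; apply; apply/forallP => u.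
apply/implyP => /andP[uv uw]; case/orP: (sq_chain uv mv) => // mu.
case: (eqVneq m u) => [->|nmu]; first exact: sq_refl.
by have := mmax u; rewrite /= uv uw => /(_ isT); rewrite leqNgt height_lt.
Qed.

Lemma sq_meetl v w : sq (meet v w) v.
Proof. by case/and3P: (meet_spec v w). Qed.

Lemma sq_meetr v w : sq (meet v w) w.
Proof. by case/and3P: (meet_spec v w). Qed.

Lemma sq_meet u v w : sq u v -> sq u w -> sq u (meet v w).
Proof.
by case/and3P: (meet_spec v w) => _ _ /forallP glb uv uw; move: (glb u); rewrite uv uw.
Qed.

Lemma meet_uniq v w m : sq m v -> sq m w ->
  (forall u, sq u v -> sq u w -> sq u m) -> meet v w = m.
Proof.
move=> mv mw glb; apply: sq_anti (sq_meet mv mw).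
by apply: glb; [apply: sq_meetl|apply: sq_meetr].
Qed.

Lemma meet_l v w : sq v w -> meet v w = v.
Proof. by move=> vw; apply: meet_uniq => //; apply: sq_refl. Qed.

Lemma meetC v w : meet v w = meet w v.
Proof.
by apply: meet_uniq => [||u uw uv]; [apply: sq_meetr|apply: sq_meetl|apply: sq_meet].
Qed.

Lemma meet_isucc m a b v w : isucc m a -> isucc m b -> a != b ->
  sq a v -> sq b w -> meet v w = m.
Proof.
move=> ma mb nab av bw; apply: meet_uniq => [||t tv tw].
- exact: sq_trans (isucc_sq ma) av.
- exact: sq_trans (isucc_sq mb) bw.
case: (sq_isucc_cases ma av tv) => // sat.
case: (sq_isucc_cases mb bw (sq_trans sat tw)) => [am|ba].
  by move: (isucc_neq ma); rewrite (sq_anti (isucc_sq ma) am) eqxx.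
by move: nab; rewrite (isucc_uniq ma mb (sq_refl a) ba) eqxx.
Qed.

Lemma sib_neq a b : ot_sib a b -> a != b.
Proof. by apply: contraTneq => ->; rewrite ot_sib_irr. Qed.

Definition left_of v w := exists m a b,
  [/\ isucc m a, sq a v, isucc m b, sq b w & ot_sib a b].

Lemma left_of_sib m a b v w : isucc m a -> sq a v -> isucc m b -> sq b w ->
  ot_sib a b -> left_of v w.
Proof. by move=> *; exists m, a, b. Qed.

Lemma lexleP v w : reflect (sq v w \/ left_of v w) (lexle v w).
Proof.
apply: (iffP orP) => [[vw|/existsP[a /existsP[b /and5P[ma av mb bw ab]]]]|].
- by left.
- by right; apply: left_of_sib ma av mb bw ab.
case=> [vw|[m [a [b [ma av mb bw ab]]]]]; first by left.
right; rewrite (meet_isucc ma mb (sib_neq ab) av bw).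
by apply/existsP; exists a; apply/existsP; exists b; rewrite ma av mb bw ab.
Qed.

Lemma left_of_meet v w : left_of v w -> exists a b,
  [/\ isucc (meet v w) a, sq a v, isucc (meet v w) b, sq b w & ot_sib a b].
Proof.
case=> m [a [b [ma av mb bw ab]]].
by rewrite (meet_isucc ma mb (sib_neq ab) av bw); exists a, b.
Qed.

Lemma left_of_sqr v w w' : left_of v w -> sq w w' -> left_of v w'.
Proof.
case=> m [a [b [ma av mb bw ab]]] ww'.
exact: left_of_sib ma av mb (sq_trans bw ww') ab.
Qed.

Lemma left_of_sql v v' w : left_of v w -> sq v v' -> left_of v' w.
Proof.
case=> m [a [b [ma av mb bw ab]]] vv'.
exact: left_of_sib ma (sq_trans av vv') mb bw ab.
Qed.

Lemma sq_left_of u v w : sq u v -> left_of v w -> sq u w \/ left_of u w.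
Proof.
move=> uv [m [a [b [ma av mb bw ab]]]].
case: (sq_isucc_cases ma av uv) => [um|au].
  by left; apply: sq_trans um (sq_trans (isucc_sq mb) bw).
by right; apply: left_of_sib ma au mb bw ab.
Qed.

Lemma left_of_trans v u w : left_of u v -> left_of v w -> left_of u w.
Proof.
move=> [m [a [b [ma au mb bv ab]]]] [n [c [d [nc cv nd dw cd]]]].
case: (sq_isucc_cases nc cv bv) => [bn|cb].
  by apply: left_of_sib ma au mb (sq_trans bn (sq_trans (isucc_sq nd) dw)) ab.
case: (sq_isucc_cases mb bv cv) => [cm|bc].
  by apply: left_of_sib nc (sq_trans cm (sq_trans (isucc_sq ma) au)) nd dw cd.
have ebc := sq_anti bc cb; rewrite -ebc in nc cd.
rewrite -(isucc_parent_uniq mb nc) in nd.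
exact: left_of_sib ma au nd dw (ot_sib_trans ab cd).
Qed.

Lemma left_of_sqF v w : left_of v w -> sq v w || sq w v = false.
Proof.
move=> [m [a [b [ma av mb bw ab]]]]; apply/negbTE/negP => /orP[vw|wv].
  by move: (sib_neq ab); rewrite (isucc_uniq ma mb (sq_trans av vw) bw) eqxx.
by move: (sib_neq ab); rewrite (isucc_uniq ma mb av (sq_trans bw wv)) eqxx.
Qed.

Lemma left_of_asym v w : left_of v w -> left_of w v -> False.
Proof.
move=> /left_of_meet[a [b [ma av mb bw ab]]] /left_of_meet[c [d []]].
rewrite meetC => mc cw md dv cd.
rewrite (isucc_uniq mc mb cw bw) (isucc_uniq md ma dv av) in cd.
by move: (ot_sib_trans ab cd); rewrite ot_sib_irr.
Qed.

Lemma lexle_refl v : lexle v v.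
Proof. by apply/lexleP; left; apply: sq_refl. Qed.

Lemma sq_lexle v w : sq v w -> lexle v w.
Proof. by move=> vw; apply/lexleP; left. Qed.

Lemma left_of_lexle v w : left_of v w -> lexle v w.
Proof. by move=> vw; apply/lexleP; right. Qed.

Lemma lexle_trans u v w : lexle u v -> lexle v w -> lexle u w.
Proof.
move=> /lexleP[uv|uv] /lexleP[vw|vw]; apply/lexleP.
- by left; apply: sq_trans uv vw.
- exact: sq_left_of uv vw.
- by right; apply: left_of_sqr uv vw.
- by right; apply: left_of_trans uv vw.
Qed.

Lemma lexle_anti v w : lexle v w -> lexle w v -> v = w.
Proof.
move=> /lexleP[vw|vw] /lexleP[wv|wv].
- exact: sq_anti.
- by move: (left_of_sqF wv); rewrite vw orbT.
- by move: (left_of_sqF vw); rewrite wv orbT.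
- by case: (left_of_asym vw wv).
Qed.

Lemma lexle_total v w : lexle v w || lexle w v.
Proof.
case: (eqVneq (meet v w) v) => [<-|nv]; first by rewrite sq_lexle ?sq_meetr.
case: (eqVneq (meet v w) w) => [<-|nw]; first by rewrite orbC sq_lexle ?sq_meetl.
have [a ma av] := isucc_exists (sq_meetl v w) nv.
have [b mb bw] := isucc_exists (sq_meetr v w) nw.
have nab : a != b.
  apply: contra_neq (isucc_neq ma) => eab; rewrite -eab in bw.
  exact: sq_anti (isucc_sq ma) (sq_meet av bw).
case/orP: (ot_sib_total ma mb nab) => ab; apply/orP; [left|right]; apply: left_of_lexle.
  exact: left_of_sib ma av mb bw ab.
exact: left_of_sib mb bw ma av ab.
Qed.

Lemma lexlt_geF v w : lexlt v w -> lexle w v = false.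
Proof. by case/andP=> vw; apply: contraNF => /(lexle_anti vw) ->. Qed.

Lemma left_of_lexlt v w : left_of v w -> lexlt v w.
Proof.
move=> vw; rewrite /lexlt left_of_lexle //=.
by apply/eqP => evw; move: (left_of_sqF vw); rewrite evw sq_refl.
Qed.

Lemma lexlt_left_of v w : lexlt v w -> ~~ sq v w -> left_of v w.
Proof. by case/andP=> /lexleP[->|]. Qed.

Lemma leaf_sq l w : leaf l -> sq l w -> w = l.
Proof. by move/forallP=> lmax lw; apply/eqP; move/implyP: (lmax w); apply. Qed.

Lemma leaf_lexlt_left_of l w : leaf l -> lexlt l w -> left_of l w.
Proof.
move=> ll lw; apply: (lexlt_left_of lw); apply: contraTN lw => /(leaf_sq ll) ->.
by rewrite /lexlt eqxx andbF.
Qed.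

Lemma leaf_above v : exists2 l, leaf l & sq v l.
Proof.
pose P := [pred t | sq v t]; have Pv : P v by apply: sq_refl.
case: (arg_maxnP height Pv) => l vl lmax; exists l => //.
apply/forallP => u; apply/implyP => lu; apply: contraT => nul.
by have := lmax u (sq_trans vl lu); rewrite /= leqNgt height_lt // eq_sym.
Qed.

Lemma lexmax_exists (P : pred T) : (exists v, P v) ->
  exists2 m, P m & forall w, P w -> lexle w m.
Proof.
case=> v Pv; case: (arg_maxnP (fun u => #|[set t | lexle t u]|) Pv) => m Pm mmax.
exists m => // w Pw; case/orP: (lexle_total w m) => // mw.
have sub : [set t | lexle t m] \subset [set t | lexle t w].
  by apply/subsetP=> t; rewrite !inE => /lexle_trans; apply.
have /setP/(_ w) : [set t | lexle t m] = [set t | lexle t w].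
  by apply/eqP; rewrite eqEcard sub; apply: mmax.
by rewrite !inE lexle_refl => ->.
Qed.

Lemma lexmin_exists (P : pred T) : (exists v, P v) ->
  exists2 m, P m & forall w, P w -> lexle m w.
Proof.
case=> v Pv; case: (arg_minnP (fun u => #|[set t | lexle t u]|) Pv) => m Pm mmin.
exists m => // w Pw; case/orP: (lexle_total w m) => // wm.
have sub : [set t | lexle t w] \subset [set t | lexle t m].
  by apply/subsetP=> t; rewrite !inE => /lexle_trans; apply.
have /setP/(_ m) : [set t | lexle t w] = [set t | lexle t m].
  by apply/eqP; rewrite eqEcard sub; apply: mmin.
by rewrite !inE lexle_refl => ->.
Qed.

Lemma maxleaf_lexle l v : maxleaf l -> lexle v l.
Proof.
case/andP=> _ /forallP lmax; have [u lu vu] := leaf_above v.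
by apply: lexle_trans (sq_lexle vu) _; move/implyP: (lmax u); apply.
Qed.

Definition next_leaf y y' :=
  [/\ leaf y', lexlt y y' & forall w, leaf w -> lexlt y w -> lexle y' w].

Lemma next_leaf_exists y : leaf y -> ~~ maxleaf y -> exists y', next_leaf y y'.
Proof.
move=> ly; rewrite /maxleaf ly => /forallPn[l]; rewrite negb_imply => /andP[ll nly].
have yl : lexlt y l.
  case/orP: (lexle_total y l) => [yl|ly']; last by rewrite ly' in nly.
  by rewrite /lexlt yl /=; apply: contraNneq nly => ->; apply: lexle_refl.
have [y' /andP[ly' yy'] y'min] : exists2 y', leaf y' && lexlt y y' &
    forall w, leaf w && lexlt y w -> lexle y' w.
  by apply: lexmin_exists; exists l; rewrite ll yl.
by exists y'; split=> // w lw yw; apply: y'min; rewrite /= lw.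
Qed.

Lemma lexlt_meet_transfer m r q q' w : sq m r -> m != r -> sq r q -> sq r q' ->
  leaf w -> lexlt w q -> meet w q = m -> lexlt w q' /\ meet w q' = m.
Proof.
move=> mr nmr rq rq' lw wq ewq.
have [c mc cr] := isucc_exists mr nmr.
have /left_of_meet[d [c' []]] := leaf_lexlt_left_of lw wq.
rewrite ewq => md dw mc' c'q dc'.
rewrite (isucc_uniq mc' mc c'q (sq_trans cr rq)) in dc'.
split; first exact/left_of_lexlt/(left_of_sib md dw mc (sq_trans cr rq') dc').
exact: meet_isucc md mc (sib_neq dc') dw (sq_trans cr rq').
Qed.

Lemma next_leaf_in_branch y q y' c : leaf y -> lexlt y q ->
    (forall w, leaf w -> lexlt w q -> meet w q = meet y q -> lexle w y) ->
    next_leaf y y' -> isucc (meet y q) c -> sq c q -> sq c y'.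
Proof.
move=> ly yq ymax [ly' yy' y'min] mc cq.
have /left_of_meet[a [c' [ma ay mc' c'q ac]]] := leaf_lexlt_left_of ly yq.
have ec' := isucc_uniq mc' mc c'q cq; subst c'.
have [l ll cl] := leaf_above c.
have y'l : lexle y' l := y'min l ll (left_of_lexlt (left_of_sib ma ay mc cl ac)).
have l_y' : left_of l y' -> sq c y'.
  by move/left_of_lexle/(lexle_anti y'l) ->.
have no_left d : isucc (meet y q) d -> sq d y' -> ot_sib d c -> False.
  move=> md dy' dc; have y'q := left_of_sib md dy' mc cq dc.
  move: (ymax y' ly' (left_of_lexlt y'q) (meet_isucc md mc (sib_neq dc) dy' cq)).
  by rewrite lexlt_geF.
have /left_of_meet[a' [b [na' a'y nb by' a'b]]] := leaf_lexlt_left_of ly yy'.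
case: (sq_isucc_cases ma ay (sq_meetl y y')) => [nm|an].
  case: (sq_isucc_cases na' a'y (sq_trans (isucc_sq ma) ay)) => [mn|a'm].
    rewrite (sq_anti nm mn) in na' nb.
    rewrite (isucc_uniq na' ma a'y ay) in a'b.
    case: (eqVneq b c) => [<-//|nbc].
    case/orP: (ot_sib_total nb mc nbc) => [bc|cb]; first by case: (no_left b nb by' bc).
    exact/l_y'/(left_of_sib mc cl nb by' cb).
  apply/l_y'/(left_of_sib na' _ nb by' a'b).
  exact: sq_trans a'm (sq_trans (isucc_sq mc) cl).
by case: (no_left a ma (sq_trans an (sq_trans (isucc_sq nb) by')) ac).
Qed.

Lemma between_next_leaf_sq y y' b t : next_leaf y y' ->
  isucc (meet y y') b -> sq b y' -> lexle t y' -> ~~ lexle t y -> sq b t.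
Proof.
move=> [_ _ y'min] mb by' ty' nty.
have yt : lexle y t by case/orP: (lexle_total t y) => [ty|//]; rewrite ty in nty.
case/lexleP: ty' => [ty'|ty'].
  case: (sq_isucc_cases mb by' ty') => // tm.
  by move: nty; rewrite (sq_lexle (sq_trans tm (sq_meetl y y'))).
have [l ll tl] := leaf_above t.
have yl : lexlt y l.
  rewrite /lexlt (lexle_trans yt (sq_lexle tl)) /=.
  by apply: contraNneq nty => ely; rewrite ely sq_lexle.
have l_y' := left_of_sql ty' tl.
have ey'l := lexle_anti (y'min l ll yl) (left_of_lexle l_y').
by move: (left_of_sqF l_y'); rewrite -ey'l sq_refl.
Qed.

Lemma lexlt_isucc_branch z q c w : leaf z -> lexlt z q ->
  isucc (meet z q) c -> sq c q -> sq c w -> lexlt z w.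
Proof.
move=> lz zq mc cq cw.
have /left_of_meet[d [c' [md dz mc' c'q dc']]] := leaf_lexlt_left_of lz zq.
rewrite (isucc_uniq mc' mc c'q cq) in dc'.
exact/left_of_lexlt/(left_of_sib md dz mc cw dc').
Qed.

End Tree.

Lemma morph_meet (S T : otree) (e : S -> T) a b :
  morphism e -> e (meet a b) = meet (e a) (e b).
Proof. by case=> + _ _; apply. Qed.

Lemma morph_lexle (S T : otree) (e : S -> T) a b :
  morphism e -> lexle a b -> lexle (e a) (e b).
Proof. by case=> _ + _; apply. Qed.

Lemma morph_sq (S T : otree) (e : S -> T) a b :
  morphism e -> sq a b -> sq (e a) (e b).
Proof. by move=> he ab; rewrite -(meet_l ab) morph_meet // sq_meetr. Qed.

Lemma embedding_sq (S T : otree) (e : S -> T) a b :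
  embedding e -> sq (e a) (e b) -> sq a b.
Proof.
case=> he einj /meet_l; rewrite -morph_meet // => /einj <-; exact: sq_meetr.
Qed.

Lemma embedding_lexlt (S T : otree) (e : S -> T) a b :
  embedding e -> lexlt a b -> lexlt (e a) (e b).
Proof.
by case=> he einj /andP[ab nab]; rewrite /lexlt morph_lexle // (inj_eq einj).
Qed.

Lemma injection_embedding (T S : otree) (f : T -> S) e :
  injection_of f e -> embedding e.
Proof. by case=> he fe _; split=> //; apply: can_inj fe. Qed.

Lemma injection_of_comp (S T V : otree) (g : V -> T) (f : T -> S) i j :
  injection_of f i -> injection_of g j -> injection_of (f \o g) (j \o i).
Proof.
move=> [hi fi ifw] [hj gj jgw]; split.
- split=> [a b|a b ab|] /=; rewrite ?morph_meet //.
    by apply: morph_lexle hj _; apply: morph_lexle hi _.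
  by case: hi => _ _ ->; case: hj => _ _ ->.
- by move=> s /=; rewrite gj fi.
- by move=> w /=; apply: sq_trans (jgw w); apply: morph_sq hj (ifw (g w)).
Qed.

Lemma iconj_exists (S T : otree) (i : S -> T) x : embedding i -> leaf x ->
  exists y, iconj i x y.
Proof.
move=> hi lx; case: (boolP (maxleaf x)) => [mx|nmx].
  have [l0 ll0 _] := leaf_above (ot_root T).
  have [y ly ymax] := lexmax_exists (ex_intro (@leaf T) l0 ll0).
  exists y; split=> //; left; split=> //.
  by rewrite /maxleaf ly; apply/forallP => w; apply/implyP; apply: ymax.
have [x' [lx' xx' x'min]] := next_leaf_exists lx nmx.
have nsq : ~~ sq (i x) (i x').
  apply: contraTN xx' => /(embedding_sq hi)/(leaf_sq lx) ->.
  by rewrite /lexlt eqxx andbF.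
have /left_of_meet[a [b [ma av mb bw ab]]] :=
  lexlt_left_of (embedding_lexlt hi xx') nsq.
have [w0 lw0 xw0] := leaf_above (i x).
have aw0 := sq_trans av xw0.
pose Q : pred T :=
  [pred w | [&& leaf w, lexlt w (i x') & meet w (i x') == meet (i x) (i x')]].
have Qw0 : Q w0.
  rewrite /Q /= lw0 (left_of_lexlt (left_of_sib ma aw0 mb bw ab)) /=.
  by rewrite (meet_isucc ma mb (sib_neq ab) aw0 bw).
have [y /and3P[ly yx' /eqP ey] ymax] := lexmax_exists (ex_intro _ w0 Qw0).
exists y; split=> //; right; exists x'; split=> //; split=> // w lw wx' ew.
by apply: ymax; rewrite /Q /= lw wx' ew eqxx.
Qed.

Lemma iconj_comp (S T V : otree) (i : S -> T) (j : T -> V) x y z :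
  embedding i -> embedding j -> iconj i x y -> iconj j y z -> iconj (j \o i) x z.
Proof.
move=> hi [hj jinj] [lx ly hxy] [_ lz hyz]; split=> //.
case: hxy => [[mx my]|[x' [lx' xx' x'min yx' [exy ymax]]]].
  case: hyz => [[_ mz]|[y' [ly' yy' _ _ _]]]; first by left.
  by move: (maxleaf_lexle y' my); rewrite lexlt_geF.
case: hyz => [[my _]|[y' [ly' yy' y'min zy' [eyz zmax]]]].
  by move: (maxleaf_lexle (i x') my); rewrite lexlt_geF.
right; exists x'.
have /left_of_meet[a [c [ma ay mc cx' ac]]] := leaf_lexlt_left_of ly yx'.
have cy' : sq c y'.
  apply: next_leaf_in_branch ly yx' _ (And3 ly' yy' y'min) mc cx' => w lw wx' ew.
  by apply: ymax; rewrite // exy ew.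
have jmc : sq (j (meet y (i x'))) (j c) := morph_sq hj (isucc_sq mc).
have njmc : j (meet y (i x')) != j c by rewrite (inj_eq jinj) isucc_neq.
have ejy : meet (j y) (j y') = j (meet y (i x')).
  by rewrite -morph_meet // (meet_isucc ma mc (sib_neq ac) ay cy').
have ejx : meet (j (i x)) (j (i x')) = j (meet y (i x')) by rewrite -morph_meet // exy.
have [cjy' cjx'] := (morph_sq hj cy', morph_sq hj cx').
have [zx' ezx'] :=
  lexlt_meet_transfer jmc njmc cjy' cjx' lz zy' (etrans (esym eyz) ejy).
split=> //=; rewrite ejx ezx'; split=> // w lw wx' ew.
have [wy' ewy'] := lexlt_meet_transfer jmc njmc cjx' cjy' lw wx' (esym ew).
by apply: zmax; rewrite // ejy ewy'.
Qed.

Lemma iconj_injection_lexle (T V : otree) (g : V -> T) j y z :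
  injection_of g j -> iconj j y z -> forall w, lexle w z -> lexle (g w) y.
Proof.
move=> hj [ly lz [[my _]|[y' [ly' yy' y'min zy' [eyz _]]]]] w wz.
  exact: maxleaf_lexle.
apply: contraT => ngy; have [hjm jinj] := injection_embedding hj.
have [_ _ jg] := hj.
have jgz : lexle (j (g w)) z := lexle_trans (sq_lexle (jg w)) wz.
have gy' : lexle (g w) y'.
  case/orP: (lexle_total (g w) y') => // y'g.
  by move: (lexle_trans (morph_lexle hjm y'g) jgz); rewrite lexlt_geF.
have /left_of_meet[_ [b [_ _ mb by' _]]] := leaf_lexlt_left_of ly yy'.
have bg := between_next_leaf_sq (And3 ly' yy' y'min) mb by' gy' ngy.
have [c mc cb] := isucc_exists (morph_sq hjm (isucc_sq mb))
  (contra_neq (@jinj _ _) (isucc_neq mb)).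
rewrite morph_meet // eyz in mc.
have zw := lexlt_isucc_branch lz zy' mc (sq_trans cb (morph_sq hjm by'))
  (sq_trans cb (sq_trans (morph_sq hjm bg) (jg w))).
by move: wz; rewrite lexlt_geF.
Qed.

Theorem lemma4p15 (S T V : otree) (g : V -> T) (f : T -> S)
  (hg : rigid_surjection g) (hf : rigid_surjection f)
  (x : S) (y : T) (hy : fconj f x y) :
  (exists z : V, fconj g y z) /\
  forall z : V, fconj g y z ->
    [/\ fconj (f \o g) x z & forall w : V, lexle w z -> lexle (g w) y].
Proof.
have [i [hi hxy]] := hy; have [_ ly _] := hxy.
split.
  have [j hj] := hg; have [z hyz] := iconj_exists (injection_embedding hj) ly.
  by exists z, j.
move=> z [j [hj hyz]]; split; last exact: iconj_injection_lexle hj hyz.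
exists (j \o i); split; first exact: injection_of_comp.
exact: iconj_comp (injection_embedding hi) (injection_embedding hj) hxy hyz.
Qed.
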